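(* Let $X=\mu^{-1}(0)/G$ be a toric Calabi-Yau manifold obtained as a symplectic quotient of $\mathbb{C}^m$ by a subtorus $G\subset T^m$, with quotient map $\pi:\mu^{-1}(0)\to X$, and let $\epsilon\in\mathbb{C}^\times$. Let $\rho=(\rho_0,|\chi^u-\epsilon|):X\to B=\mathbb{R}^{n-1}\times\mathbb{R}_{\geq 0}$ be the Gross fibration and let $$\tilde\rho:\mathbb{C}^m\to\tilde B=\mathbb{R}^{m-1}\times\mathbb{R}_{\geq0},\quad (X_1,\dots,X_m)\mapsto\big(|X_1|^2-|X_m|^2,\dots,|X_{m-1}|^2-|X_m|^2,\ |X_1X_2\cdots X_m-\epsilon|\big)$$ be the Harvey-Lawson fibration. Then the Gross fibration $\rho$ is the fiberwise quotient of $\tilde\rho|_{\mu^{-1}(0)}$ by $G$: there is an embedding of affine manifolds $\iota:B\hookrightarrow\tilde B$ (induced by the map $\mathfrak{t}^*\to(\mathbb{R}^m)^*$, $\mathbf{x}\mapsto(\ell_1(\mathbf{x}),\dots,\ell_m(\mathbf{x}))$) such that $\tilde\rho|_{\mu^{-1}(0)}=\iota\circ\rho\circ\pi$, so that each fiber of $\rho$ is the quotient by $G$ of the corresponding fiber of $\tilde\rho|_{\mu^{-1}(0)}$.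
   Context: $T^m$ acts diagonally on $\mathbb{C}^m$ (standard symplectic form); $G\subset T^m$ is a subtorus of dimension $r=m-n$ with moment map $\mu$, acting freely on $\mu^{-1}(0)$, and $X=\mu^{-1}(0)/G$ is a toric manifold of complex dimension $n$ with residual torus $T=T^m/G$ and moment map $\phi:X\to\mathfrak{t}^*$, whose image is $\Delta=\{\mathbf{x}:\ell_i(\mathbf{x})\ge0,\ i=1,\dots,m\}$, $\ell_i(\mathbf{x})=2\pi(\langle\mathbf{x},v_i\rangle-\lambda_i)$, with $v_i\in N=\mathbb{Z}^n$ the primitive inward normals (ray generators of the fan) and $\lambda_i\in\mathbb{R}$; one has $\ell_i(\phi([X_1,\dots,X_m]))=2\pi|X_i|^2$ on $\mu^{-1}(0)$. $X$ is Calabi-Yau (trivial canonical bundle) and semi-projective (support of the fan convex), so there is $u\in M=\mathrm{Hom}(N,\mathbb{Z})$ with $\langle u,v_i\rangle=1$ for all $i$; the character $\chi^u$ is a holomorphic function on $X$ vanishing to first order exactly along the toric prime divisors, and it lifts to the monomial $X_1\cdots X_m$ on $\mathbb{C}^m$. $T_0\subset T$ is the subtorus preserving $\chi^u$ (equivalently the holomorphic volume form), and $\rho_0:X\to\mathfrak{t}_0^*\cong\mathbb{R}^{n-1}$ is its moment map, i.e. $\phi$ composed with the projection along the ray spanned by $u$. The Gross fibration is $\rho=(\rho_0,|\chi^u-\epsilon|)$, a special Lagrangian torus fibration. *)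

From mathcomp Require Import all_boot all_algebra.
From mathcomp Require Export complex.
From mathcomp Require Export reals trigo.
Import GRing.Theory Num.Theory.
Set Implicit Arguments. Unset Strict Implicit. Unset Printing Implicit Defensive.
Local Open Scope ring_scope.

(* Ambient space C^k is ('I_k -> R[i]).  In the theorem the paper's m is
   written m.+1 (so that the last coordinate ord_max exists). *)

Definition sqmod (R : realType) (z : R[i]) : R := complex.Re z ^+ 2 + complex.Im z ^+ 2.
Definition modC (R : realType) (z : R[i]) : R := Num.sqrt (sqmod z).

Definition pairing (R : realType) (n : nat) (x : 'I_n -> R) (w : 'I_n -> int) : R :=
  \sum_(j < n) x j * (w j)%:~R.

Definition ell (R : realType) (n k : nat) (v : 'I_k -> 'I_n -> int) (lam : 'I_k -> R)
  (i : 'I_k) (x : 'I_n -> R) : R :=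
  2 * pi * (pairing x (v i) - lam i).

Definition in_torus (R : realType) (k : nat) (g : 'I_k -> R[i]) : Prop :=
  forall i, sqmod (g i) = 1.
Definition act (R : realType) (k : nat) (g X : 'I_k -> R[i]) : 'I_k -> R[i] :=
  fun i => g i * X i.

(* G = kernel of T^k -> T^n induced by e_i |-> v_i *)
Definition in_G (R : realType) (n k : nat) (v : 'I_k -> 'I_n -> int) (g : 'I_k -> R[i]) : Prop :=
  in_torus g /\ forall j : 'I_n, \prod_(i < k) (g i) ^ (v i j) = 1.

(* Lie algebra of G: g = ker (R^k -> R^n, e_i |-> v_i) *)
Definition in_LieG (R : realType) (n k : nat) (v : 'I_k -> 'I_n -> int) (a : 'I_k -> R) : Prop :=
  forall j : 'I_n, \sum_(i < k) a i * (v i j)%:~R = 0.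

(* moment map of G evaluated on a in Lie(G):
   mu(X)(a) = sum_i a_i (|X_i|^2 + lambda_i)  (normalised so that
   l_i(phi [X]) = 2 pi |X_i|^2 on mu^{-1}(0)) *)
Definition moment (R : realType) (k : nat) (lam : 'I_k -> R) (X : 'I_k -> R[i])
  (a : 'I_k -> R) : R :=
  \sum_(i < k) a i * (sqmod (X i) + lam i).
Definition mu_zero (R : realType) (n k : nat) (v : 'I_k -> 'I_n -> int) (lam : 'I_k -> R)
  (X : 'I_k -> R[i]) : Prop :=
  forall a, in_LieG v a -> moment lam X a = 0.

(* points of the quotient mu^{-1}(0)/G are G-orbits (sets of points of C^k);
   quotient map pi *)
Definition quotmap (R : realType) (n k : nat) (v : 'I_k -> 'I_n -> int)
  (X : 'I_k -> R[i]) : ('I_k -> R[i]) -> Prop :=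
  fun Y => exists g, in_G v g /\ Y = act g X.

(* moment map phi of the residual torus, as a relation: phi(O) = x *)
Definition phi_rel (R : realType) (n k : nat) (v : 'I_k -> 'I_n -> int) (lam : 'I_k -> R)
  (O : ('I_k -> R[i]) -> Prop) (x : 'I_n -> R) : Prop :=
  exists Y, O Y /\ forall i, ell v lam i x = 2 * pi * sqmod (Y i).

(* the character chi^u, through its lift X_1 ... X_k *)
Definition chi_rel (R : realType) (k : nat) (O : ('I_k -> R[i]) -> Prop) (z : R[i]) : Prop :=
  exists Y, O Y /\ z = \prod_(i < k) Y i.

(* t_0^* = t^* / R u : points represented by elements of t^*, equality mod R u *)
Definition eq_mod_u (R : realType) (n : nat) (u : 'I_n -> int) (y x : 'I_n -> R) : Prop :=
  exists s : R, forall j, y j = x j + s * (u j)%:~R.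

(* B = t_0^* x R_{>=0}; a point (y, r) with y a representative in t^* *)
Definition Bpt (R : realType) (n : nat) := (('I_n -> R) * R)%type.

(* Gross fibration rho = (rho_0, |chi^u - eps|) as a relation on X x B:
   rho(O) = (y, r) (y taken modulo R u) *)
Definition rho_rel (R : realType) (n k : nat) (v : 'I_k -> 'I_n -> int) (lam : 'I_k -> R)
  (u : 'I_n -> int) (eps : R[i]) (O : ('I_k -> R[i]) -> Prop) (b : Bpt R n) : Prop :=
  (exists x, phi_rel v lam O x /\ eq_mod_u u b.1 x) /\
  (exists z, chi_rel O z /\ b.2 = modC (z - eps)).

Definition HL (R : realType) (m : nat) (eps : R[i]) (X : 'I_m.+1 -> R[i]) :
  ('I_m -> R) * R :=
  (fun i => sqmod (X (widen_ord (leqnSn m) i)) - sqmod (X ord_max),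
   modC (\prod_(i < m.+1) X i - eps)).

Definition iotaB (R : realType) (n m : nat) (v : 'I_m.+1 -> 'I_n -> int) (lam : 'I_m.+1 -> R)
  (b : Bpt R n) : ('I_m -> R) * R :=
  (fun i => (ell v lam (widen_ord (leqnSn m) i) b.1 - ell v lam ord_max b.1) / (2 * pi),
   b.2).

Definition Bcomb (R : realType) (n : nat) (t : R) (a b : Bpt R n) : Bpt R n :=
  (fun j => t * a.1 j + (1 - t) * b.1 j, t * a.2 + (1 - t) * b.2).
Definition Btcomb (R : realType) (m : nat) (t : R) (a b : ('I_m -> R) * R) : ('I_m -> R) * R :=
  (fun j => t * a.1 j + (1 - t) * b.1 j, t * a.2 + (1 - t) * b.2).
Arguments iotaB {R n m} v lam b.
Arguments HL {R m} eps X.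
Arguments rho_rel {R n k} v lam u eps O b.
Arguments quotmap {R n k} v X _.
Arguments mu_zero {R n k} v lam X.
Arguments in_G {R n k} v g.
Arguments pairing {R n} x w.
Arguments act {R k} g X _.
Arguments eq_mod_u {R n} u y x.
Arguments Bcomb {R n} t a b.
Arguments Btcomb {R m} t a b.

From mathcomp Require Import all_boot all_algebra.
From mathcomp Require Import complex reals trigo.
From mathcomp Require Import ring lra.
Import GRing.Theory Num.Theory.
Local Open Scope ring_scope.
Set Implicit Arguments. Unset Strict Implicit.

(* On mu^{-1}(0) the moment map of the residual torus satisfies
   l_i(phi [X]) = 2 pi |X_i|^2, so (l_i - l_m) / 2 pi are exactly the
   Harvey-Lawson coordinates |X_i|^2 - |X_m|^2.  Since <u, v_i> = 1 for all i,
   moving x along R u shifts every l_i(x) by the same amount, so these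
   differences only depend on rho_0; conversely, as the v_i span, equal
   differences force equality modulo R u.  Finally G preserves each |X_i| and,
   again because <u, v_i> = 1, the monomial X_1 ... X_m lifting chi^u. *)

Lemma sqmodM (R : realType) (z w : R[i]) : sqmod (z * w) = sqmod z * sqmod w.
Proof. by case: z => a b; case: w => c d; rewrite /sqmod /=; ring. Qed.

Lemma sqmod1 (R : realType) : sqmod (1 : R[i]) = 1.
Proof. by rewrite /sqmod /=; ring. Qed.

Lemma sqmod_eq1_neq0 (R : realType) (z : R[i]) : sqmod z = 1 -> z != 0.
Proof. by apply: contra_eqN => /eqP ->; rewrite /sqmod /= expr0n addr0 eq_sym oner_eq0. Qed.

Lemma pi2_neq0 (R : realType) : (2 * pi : R) != 0.
Proof. by rewrite mulf_neq0 ?pnatr_eq0 // lt0r_neq0 // pi_gt0. Qed.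

Lemma pairing_comb (R : realType) n (a b : R) (x y : 'I_n -> R) w :
  pairing (fun j => a * x j + b * y j) w = a * pairing x w + b * pairing y w.
Proof. by rewrite /pairing !mulr_sumr -big_split /=; apply: eq_bigr => j _; ring. Qed.

Lemma exprz_sum (F : fieldType) (x : F) I (r : seq I) (P : pred I) (e : I -> int) :
  x != 0 -> x ^ (\sum_(i <- r | P i) e i) = \prod_(i <- r | P i) x ^ e i.
Proof.
by move=> x_neq0; elim/big_rec2: _ => [|i s p _ <-]; rewrite ?expr0z ?expfzDr.
Qed.

Lemma prod_exprz (F : fieldType) I (r : seq I) (P : pred I) (f : I -> F) (e : int) :
  (\prod_(i <- r | P i) f i) ^ e = \prod_(i <- r | P i) f i ^ e.
Proof. by elim/big_rec2: _ => [|i s p _ <-]; rewrite ?exp1rz ?expfzMl. Qed.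

Lemma ord_max_or_widen m (i : 'I_m.+1) :
  i = ord_max \/ exists j : 'I_m, i = widen_ord (leqnSn m) j.
Proof.
have [lt_im | le_mi] := ltnP i m; first by right; exists (Ordinal lt_im); apply: val_inj.
by left; apply: val_inj; apply/eqP; rewrite /= eqn_leq le_mi -ltnS ltn_ord.
Qed.

(* Membership in the row space of V is tested against cokermx V, whose columns
   lie in Lie(G) = ker V. *)
Lemma pairing_onto_LieG_annihilator (R : realType) n k (v : 'I_k -> 'I_n -> int)
    (w : 'I_k -> R) :
  (forall a, in_LieG v a -> \sum_(i < k) a i * w i = 0) ->
  exists x : 'I_n -> R, forall i, pairing x (v i) = w i.
Proof.
move=> w_annih.
pose V : 'M[R]_(n, k) := \matrix_(j, i) (v i j)%:~R.
have coker_LieG c : in_LieG v (fun i => cokermx V i c).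
  move=> j; move/matrixP/(_ j c): (mulmx_coker V); rewrite !mxE => VcokerV.
  by rewrite -[RHS]VcokerV; apply: eq_bigr => i _; rewrite [V _ _]mxE mulrC.
have : (\row_i w i <= V)%MS.
  rewrite submxE; apply/eqP/matrixP => a c; rewrite mxE [RHS]mxE.
  rewrite -[RHS](w_annih _ (coker_LieG c)).
  by apply: eq_bigr => i _; rewrite [X in X * _]mxE mulrC.
case/submxP => D /matrixP w_eq; exists (fun j => D 0 j) => i.
by move: (w_eq 0 i); rewrite !mxE => ->; apply: eq_bigr => j _; rewrite mxE.
Qed.

Section CalabiYau.

Variables (R : realType) (n k : nat) (v : 'I_k -> 'I_n -> int) (u : 'I_n -> int).
Hypothesis hCY : forall i, \sum_(j < n) u j * v i j = 1%R.

Lemma pairing_u i : pairing (fun j => (u j)%:~R : R) (v i) = 1.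
Proof.
rewrite /pairing -[1 in RHS]mulr1z -(hCY i) mulrz_sumr.
by apply: eq_bigr => j _; rewrite intrM.
Qed.

Lemma pairing_shift (x : 'I_n -> R) s i :
  pairing (fun j => x j + s * (u j)%:~R) (v i) = pairing x (v i) + s.
Proof.
have -> : (fun j => x j + s * (u j)%:~R) = (fun j => 1 * x j + s * (u j)%:~R).
  by apply: boolp.funext => j; rewrite mul1r.
by rewrite pairing_comb pairing_u mul1r mulr1.
Qed.

Lemma pairing_const_mod_u (d : 'I_n -> R) c :
  (forall x : 'I_n -> R, (forall i, pairing x (v i) = 0) -> forall j, x j = 0) ->
  (forall i, pairing d (v i) = c) -> forall j, d j = c * (u j)%:~R.
Proof.
move=> hspan d_const j; apply/eqP; rewrite -subr_eq0; apply/eqP.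
have := hspan (fun j => 1 * d j + (- c) * (u j)%:~R) _ j; rewrite mul1r mulNr; apply.
by move=> i; rewrite pairing_comb d_const pairing_u; ring.
Qed.

(* prod_i g_i = prod_j (prod_i g_i^(v_ij))^(u_j) since <u, v_i> = 1 *)
Lemma in_G_prod_eq1 (g : 'I_k -> R[i]) : in_G v g -> \prod_(i < k) g i = 1.
Proof.
move=> [g_torus g_ker].
transitivity (\prod_(i < k) \prod_(j < n) (g i ^ v i j) ^ u j).
  apply: eq_bigr => i _; rewrite -{1}(expr1z (g i)) -(hCY i).
  rewrite exprz_sum ?sqmod_eq1_neq0 //.
  by apply: eq_bigr => j _; rewrite exprz_exp mulrC.
by rewrite exchange_big; apply: big1 => j _; rewrite -prod_exprz g_ker exp1rz.
Qed.

End CalabiYau.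

Section Embedding.

Variables (R : realType) (n m : nat) (v : 'I_m.+1 -> 'I_n -> int) (lam : 'I_m.+1 -> R).
Local Notation wid := (widen_ord (leqnSn m)).

Lemma iotaBE (b : Bpt R n) :
  iotaB v lam b = (fun i => pairing b.1 (v (wid i)) - pairing b.1 (v ord_max)
                            - (lam (wid i) - lam ord_max), b.2).
Proof.
congr pair; apply: boolp.funext => i.
by rewrite /ell -mulrBr [2 * pi * _]mulrC mulfK ?pi2_neq0 //; ring.
Qed.

Lemma iotaB_comb t (a b : Bpt R n) :
  iotaB v lam (Bcomb t a b) = Btcomb t (iotaB v lam a) (iotaB v lam b).
Proof.
rewrite !iotaBE /Btcomb /=; congr pair; apply: boolp.funext => i.
by rewrite !pairing_comb; ring.
Qed.

Lemma iotaB_shift u :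
  (forall i, \sum_(j < n) u j * v i j = 1%R) ->
  forall (x : 'I_n -> R) s r,
  iotaB v lam ((fun j => x j + s * (u j)%:~R), r) = iotaB v lam (x, r).
Proof.
move=> hCY x s r; rewrite !iotaBE /=; congr pair; apply: boolp.funext => i.
by rewrite !pairing_shift //; ring.
Qed.

Lemma iotaB_inj u :
  (forall x : 'I_n -> R, (forall i, pairing x (v i) = 0) -> forall j, x j = 0) ->
  (forall i, \sum_(j < n) u j * v i j = 1%R) ->
  forall b b' : Bpt R n,
  iotaB v lam b = iotaB v lam b' -> eq_mod_u u b'.1 b.1 /\ b'.2 = b.2.
Proof.
move=> hspan hCY [x r] [x' r']; rewrite !iotaBE => -[/= iota_eq ->]; split=> //.
pose d j := 1 * x' j + (-1) * x j.
have d_const i : pairing d (v i) = pairing d (v ord_max).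
  have [-> // | [j ->]] := ord_max_or_widen i.
  by move: (congr1 (fun f => f j) iota_eq); rewrite /d !pairing_comb /=; lra.
exists (pairing d (v ord_max)) => j.
by rewrite -(pairing_const_mod_u hCY hspan d_const j) /d; ring.
Qed.

End Embedding.

Section Fibers.

Variables (R : realType) (n k : nat) (v : 'I_k -> 'I_n -> int) (lam : 'I_k -> R).
Variable X : 'I_k -> R[i].

Lemma quotmap_refl : quotmap v X X.
Proof.
exists (fun _ => 1); split; last by apply: boolp.funext => i; rewrite /act mul1r.
by split=> [i | j]; [apply: sqmod1 | apply: big1 => i _; rewrite exp1rz].
Qed.

Lemma phi_rel_quotmapE x :
  phi_rel v lam (quotmap v X) x <-> forall i, ell v lam i x = 2 * pi * sqmod (X i).
Proof.
split=> [[_ [[g [[g_torus _] ->]] ell_eq]] i | ell_eq].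
  by rewrite ell_eq /act sqmodM g_torus mul1r.
by exists X; split; first exact: quotmap_refl.
Qed.

Lemma chi_rel_quotmapE u z :
  (forall i, \sum_(j < n) u j * v i j = 1%R) ->
  chi_rel (quotmap v X) z <-> z = \prod_(i < k) X i.
Proof.
move=> hCY; split=> [[_ [[g [g_G ->]] ->]] | ->].
  by rewrite /act big_split /= (in_G_prod_eq1 hCY g_G) mul1r.
by exists X; split; first exact: quotmap_refl.
Qed.

Lemma phi_rel_quotmap_exists :
  mu_zero v lam X -> exists x, forall i, ell v lam i x = 2 * pi * sqmod (X i).
Proof.
move=> X_mu0.
have [x x_eq] := pairing_onto_LieG_annihilator (w := fun i => sqmod (X i) + lam i) X_mu0.
by exists x => i; rewrite /ell x_eq; ring.
Qed.

End Fibers.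

Section GrossFibration.

Variables (R : realType) (n m : nat) (v : 'I_m.+1 -> 'I_n -> int) (lam : 'I_m.+1 -> R).
Variables (u : 'I_n -> int) (eps : R[i]) (X : 'I_m.+1 -> R[i]).
Hypothesis hspan : forall x : 'I_n -> R, (forall i, pairing x (v i) = 0) -> forall j, x j = 0.
Hypothesis hCY : forall i, \sum_(j < n) u j * v i j = 1%R.

Lemma iotaB_phi x r :
  (forall i, ell v lam i x = 2 * pi * sqmod (X i)) -> iotaB v lam (x, r) = ((HL eps X).1, r).
Proof.
move=> ell_eq; congr pair; apply: boolp.funext => i.
by rewrite /= !ell_eq -mulrBr [2 * pi * _]mulrC mulfK ?pi2_neq0.
Qed.

Lemma rho_rel_quotmapE y r :
  rho_rel v lam u eps (quotmap v X) (y, r) <->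
  (exists x, (forall i, ell v lam i x = 2 * pi * sqmod (X i)) /\ eq_mod_u u y x)
  /\ r = modC (\prod_(i < m.+1) X i - eps).
Proof.
split=> [[[x [/phi_rel_quotmapE x_phi y_x]] [z [/(chi_rel_quotmapE X _ hCY) -> r_eq]]] | ].
  by split; first by exists x.
move=> [[x [/phi_rel_quotmapE x_phi y_x]] r_eq].
split; first by exists x.
by exists (\prod_i X i); rewrite (chi_rel_quotmapE X _ hCY).
Qed.

Hypothesis X_mu0 : mu_zero v lam X.

Lemma rho_rel_quotmap_exists : exists b, rho_rel v lam u eps (quotmap v X) b.
Proof.
have [x x_phi] := phi_rel_quotmap_exists X_mu0.
exists (x, modC (\prod_i X i - eps)); apply/rho_rel_quotmapE; split=> //.
by exists x; split=> //; exists 0 => j; rewrite mul0r addr0.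
Qed.

Lemma rho_rel_quotmap_iotaB b :
  rho_rel v lam u eps (quotmap v X) b <-> HL eps X = iotaB v lam b.
Proof.
case: b => y r; rewrite rho_rel_quotmapE; split.
  move=> [[x [x_phi [s y_eq]]] ->].
  have -> : y = (fun j => x j + s * (u j)%:~R) by apply: boolp.funext.
  by rewrite (iotaB_shift lam hCY) (iotaB_phi _ x_phi).
have [x0 x0_phi] := phi_rel_quotmap_exists X_mu0.
move=> HL_eq.
have /(iotaB_inj hspan hCY) [y_x0 r_eq] :
    iotaB v lam (x0, (HL eps X).2) = iotaB v lam (y, r).
  by rewrite (iotaB_phi _ x0_phi) -HL_eq.
by split; [exists x0 | exact: r_eq].
Qed.

End GrossFibration.

Unset Implicit Arguments. Set Strict Implicit.

Theorem mainTheorem1 (R : realType) (n m : nat)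
  (v : 'I_m.+1 -> 'I_n -> int) (lam : 'I_m.+1 -> R) (u : 'I_n -> int) (eps : R[i])
  (* v_i primitive *)
  (hprim : forall i, \big[gcdz/0%R]_(j < n) v i j = 1%R)
  (* v_1..v_m span t (equivalently dim G = m - n, T = T^m/G of dim n) *)
  (hspan : forall x : 'I_n -> R, (forall i, pairing x (v i) = 0) -> forall j, x j = 0)
  (* G acts freely on mu^{-1}(0) *)
  (hfree : forall X, mu_zero v lam X -> forall g, in_G v g ->
             (forall i, act g X i = X i) -> forall i, g i = 1)
  (* Calabi-Yau: <u, v_i> = 1 *)
  (hCY : forall i, \sum_(j < n) u j * v i j = 1%R)
  (heps : eps != 0) :
  (* iotaB descends to t_0^* x R = (t^*/R u) x R *)
  (forall (x : 'I_n -> R) (s r : R),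
      iotaB v lam ((fun j => x j + s * (u j)%:~R), r) = iotaB v lam (x, r)) /\
  (* iotaB is injective on B *)
  (forall b b' : Bpt R n, iotaB v lam b = iotaB v lam b' ->
      eq_mod_u u b'.1 b.1 /\ b'.2 = b.2) /\
  (* iotaB is affine *)
  (forall (t : R) (a b : Bpt R n),
      iotaB v lam (Bcomb t a b) = Btcomb t (iotaB v lam a) (iotaB v lam b)) /\
  (* HL|_{mu^{-1}(0)} = iotaB o rho o pi, fiberwise *)
  (forall X, mu_zero v lam X ->
      (exists b, rho_rel v lam u eps (quotmap v X) b) /\
      (forall b, rho_rel v lam u eps (quotmap v X) b <-> HL eps X = iotaB v lam b)).
Proof.
(* hprim, hfree and heps make X and the fibration smooth; the identity itself
   does not use them. *)
split; first exact: iotaB_shift.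
split; first exact: iotaB_inj.
split; first exact: iotaB_comb.
move=> X X_mu0; split; first exact: rho_rel_quotmap_exists.
by move=> b; apply: rho_rel_quotmap_iotaB.
Qed.
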